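(* Let $s\ge1$. There is a three-layer Boolean threshold network with layer sizes $s$, $\lceil\log_2 s\rceil$, $s$ which maps $\mathbf{h}^i[s]$ to $\mathbf{h}^i[s]$ for every $i=0,\ldots,s-1$.
   Context: For integers $0\le i<s$, the step vector $\mathbf{h}^i[s]\in\{0,1\}^s$ has $\mathbf{h}^i[s]_j=1$ for $0\le j\le i$ and $0$ for $i<j<s$. A Boolean threshold function is a map $\{0,1\}^h\to\{0,1\}$, $\mathbf{u}\mapsto[\mathbf{w}\cdot\mathbf{u}\ge\theta]$ (value $1$ iff $\mathbf{w}\cdot\mathbf{u}\ge\theta$) with $\mathbf{w}\in\mathbb{Z}^h,\theta\in\mathbb{Z}$. A three-layer Boolean threshold network with layer sizes $p,q,p$ computes $\mathbf{u}\mapsto\mathbf{g}(\mathbf{f}(\mathbf{u}))$ where $\mathbf{f}:\{0,1\}^p\to\{0,1\}^q$ and $\mathbf{g}:\{0,1\}^q\to\{0,1\}^p$ have all coordinates Boolean threshold functions. *)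

From mathcomp Require Import all_boot all_order all_algebra.
Set Implicit Arguments. Unset Strict Implicit. Unset Printing Implicit Defensive.
Import Order.TTheory GRing.Theory Num.Theory.
Local Open Scope ring_scope.

Definition step_vec (s i : nat) : 'I_s -> bool := fun j => (j <= i)%N.
Arguments step_vec : clear implicits.

Definition is_threshold (h : nat) (f : ('I_h -> bool) -> bool) : Prop :=
  exists (w : 'I_h -> int) (theta : int),
    forall u : 'I_h -> bool,
      f u = (theta <= \sum_(j < h) w j * (u j)%:R).

Definition threshold_layer (p q : nat) (f : ('I_p -> bool) -> ('I_q -> bool)) : Prop :=
  forall k : 'I_q, is_threshold (fun u => f u k).

Definition ceil_log2 (s : nat) : nat := up_log 2 s.

(* The hidden unit k computes the k-th binary digit of i: with weights
   bit_k(j) - bit_k(j-1) the weighted sum of h^i[s] telescopes to bit_k(i),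
   which the threshold 1 reads off.  The output unit j then tests
   j <= sum_k 2^k bit_k(i) = i.  Since s <= 2^(ceil_log2 s), ceil_log2 s
   digits suffice for every i < s. *)

From mathcomp Require Import all_boot all_order all_algebra.
From mathcomp Require Import zify.
From Stdlib Require Import FunctionalExtensionality.
Set Implicit Arguments. Unset Strict Implicit. Unset Printing Implicit Defensive.
Import Order.TTheory GRing.Theory Num.Theory.
Local Open Scope ring_scope.

Definition bitn (k j : nat) : bool := odd (j %/ 2 ^ k).

Lemma bitn0 (k : nat) : bitn k 0 = false.
Proof. by rewrite /bitn div0n. Qed.

Lemma sum_bitn (e i : nat) : (i < 2 ^ e)%N ->
  (\sum_(k < e) 2 ^ k * bitn k i)%N = i.
Proof.
elim: e i => [|e IH] i lt_i.
  by move: lt_i; rewrite expn0 ltnS leqn0 big_ord0 => /eqP.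
rewrite big_ord_recl /bitn expn0 divn1 mul1n.
have lt_half : (i./2 < 2 ^ e)%N by move: lt_i; rewrite expnS; lia.
rewrite -[RHS](odd_double_half i) -(IH _ lt_half) -muln2 big_distrl /=.
congr (_ + _)%N; apply: eq_bigr => k _.
by rewrite /bump /bitn /= expnS divnMA divn2; lia.
Qed.

Lemma telescope_sumr_pred (V : zmodType) (F : nat -> V) (n : nat) :
  \sum_(j < n.+1) (F j - F j.-1) = F n - F 0%N.
Proof.
by rewrite big_ord_recl subrr add0r -(big_mkord xpredT (fun j => F j.+1 - F j))
  telescope_sumr.
Qed.

Lemma sum_step_vec (R : pzRingType) (s i : nat) (w : nat -> R) : (i < s)%N ->
  \sum_(j < s) w j * (step_vec s i j)%:R = \sum_(j < i.+1) w j.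
Proof.
move=> lt_is; rewrite (big_ord_widen s w lt_is) [RHS]big_mkcond /=.
by apply: eq_bigr => j _; rewrite /step_vec ltnS; case: leqP; rewrite ?mulr1 ?mulr0.
Qed.

Section BinaryNetwork.

Variables s e : nat.

Definition binary_encoder (u : 'I_s -> bool) (k : 'I_e) : bool :=
  1 <= \sum_(j < s) ((bitn k j)%:R - (bitn k j.-1)%:R) * (u j)%:R :> int.

Definition step_decoder (b : 'I_e -> bool) (j : 'I_s) : bool :=
  j%:Z <= \sum_(k < e) (2 ^ k)%:R * (b k)%:R.

Lemma binary_encoder_threshold : threshold_layer binary_encoder.
Proof. by move=> k; exists (fun j => (bitn k j)%:R - (bitn k j.-1)%:R), 1. Qed.

Lemma step_decoder_threshold : threshold_layer step_decoder.
Proof. by move=> j; exists (fun k => (2 ^ k)%:R), j%:Z. Qed.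

Lemma binary_encoder_step_vec (i : nat) : (i < s)%N ->
  binary_encoder (step_vec s i) = fun k => bitn k i.
Proof.
move=> lt_is; apply: functional_extensionality => k.
rewrite /binary_encoder
  (sum_step_vec (fun j => (bitn k j)%:R - (bitn k j.-1)%:R)) //.
rewrite (telescope_sumr_pred (fun j => (bitn k j)%:R)) bitn0 subr0.
by case: bitn.
Qed.

Lemma step_decoder_bitn (i : nat) : (i < 2 ^ e)%N ->
  step_decoder (fun k => bitn k i) = step_vec s i.
Proof.
move=> lt_i; apply: functional_extensionality => j; rewrite /step_decoder /=.
have -> : \sum_(k < e) (2 ^ k)%:R * (bitn k i)%:R = i%:Z :> int.
  rewrite -[in RHS](sum_bitn lt_i) -natz natr_sum.
  by apply: eq_bigr => k _; rewrite natrM.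
by rewrite lez_nat.
Qed.

End BinaryNetwork.

Theorem lemma20 (s : nat) : (1 <= s)%N ->
  exists (f : ('I_s -> bool) -> ('I_(ceil_log2 s) -> bool))
         (g : ('I_(ceil_log2 s) -> bool) -> ('I_s -> bool)),
    threshold_layer f /\ threshold_layer g /\
    forall i : nat, (i < s)%N -> g (f (step_vec s i)) = step_vec s i.
Proof.
move=> _.
exists (@binary_encoder s (ceil_log2 s)), (@step_decoder s (ceil_log2 s)).
split; first exact: binary_encoder_threshold.
split; first exact: step_decoder_threshold.
move=> i lt_is; rewrite binary_encoder_step_vec // step_decoder_bitn //.
exact: leq_trans lt_is (up_logP s (isT : (1 < 2)%N)).
Qed.
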